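(* Let \((G,\hat{k})\) be an instance with \(\mathrm{surplus}(G)\ge 2\) given to one of Branching Rules 1 or 2 (which applies to it), and let \((G_i,\hat{k}_i)\) be any instance output by the rule. Then \(\hat{k}_i\leq\hat{k}-1\).
   Context: All graphs are finite, undirected and simple. \(MM(G)\) is the size of a maximum matching; \(LP(G)\) is the optimum value of the LP: minimize \(\sum_v x_v\) subject to \(x_u+x_v\ge1\) for each edge \(\{u,v\}\) and \(0\le x_v\le1\). \(\mathrm{surplus}(G)\) is the minimum of \(|N(Z)|-|Z|\) over nonempty independent sets \(Z\), where \(N(Z)\) is the set of vertices outside \(Z\) adjacent to \(Z\). For an instance \((G,\hat{k})\), let \(k=(2LP(G)-MM(G))+\hat{k}\), so \(\hat{k}=k+MM(G)-2LP(G)\). The Gallai–Edmonds decomposition of a graph \(H\) is \(V(H)=O\uplus I\uplus P\) where \(O\) is the set of vertices left unsaturated by some maximum matching of \(H\), \(I=N(O)\), \(P=V(H)\setminus(O\cup I)\). \(G\setminus X\) denotes \(G[V(G)\setminus X]\). With \(O\uplus I\uplus P\) the Gallai–Edmonds decomposition of \(G\): Branching Rule 1 applies iff \(G[I\cup P]\) has an edge \(\{u,v\}\); it outputs \((G_1,\hat{k}_1),(G_2,\hat{k}_2)\) with \(G_1=G\setminus\{u\}\), \(G_2=G\setminus\{v\}\), \(k_i=k-1\), \(\hat{k}_i=k_i+MM(G_i)-2LP(G_i)\). Branching Rule 2 applies iff Rule 1 does not: pick \(u\in O\) with two neighbours \(v,w\in O\); let \(G'=G\setminus\{u\}\) with Gallai–Edmonds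 decomposition \(O'\uplus I'\uplus P'\), and pick an edge \(\{x,y\}\) of \(G'[P']\); output \((G_1,\hat{k}_1),(G_2,\hat{k}_2),(G_3,\hat{k}_3)\) with \(G_1=G\setminus\{v,w\}\), \(G_2=G'\setminus\{x\}\), \(G_3=G'\setminus\{y\}\), \(k_i=k-2\), \(\hat{k}_i=k_i+MM(G_i)-2LP(G_i)\). *)

From HB Require Import structures.
From mathcomp Require Import all_boot all_order all_algebra.
From mathcomp Require Import boolp classical_sets reals.
Set Implicit Arguments. Unset Strict Implicit. Unset Printing Implicit Defensive.
Import Order.TTheory GRing.Theory Num.Theory.

(* A finite simple graph is given by a symmetric irreflexive relation [e] on a
   finite type [T] together with a vertex set [V : {set T}]; the graph is the
   one induced by [e] on [V].  Vertex deletion G \ X is then [V :\: X]. *)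

Section Graphs.
Variables (T : finType) (e : rel T).

Definition is_matching (V : {set T}) (M : {set {set T}}) : bool :=
  [forall S in M, exists u, exists v,
      [&& u \in V, v \in V, e u v & S == [set u; v]]] &&
  [forall S1 in M, forall S2 in M, (S1 != S2) ==> [disjoint S1 & S2]].

Definition MM (V : {set T}) : nat :=
  \max_(M : {set {set T}} | is_matching V M) #|M|.

Definition is_max_matching (V : {set T}) (M : {set {set T}}) : bool :=
  is_matching V M && (#|M| == MM V).

Definition saturates (M : {set {set T}}) (x : T) : bool := [exists S in M, x \in S].

Definition nbhd (V Z : {set T}) : {set T} :=
  [set y in V | (y \notin Z) && [exists z in Z, e z y]].

Definition independent (V Z : {set T}) : bool :=
  (Z \subset V) && [forall u in Z, forall v in Z, ~~ e u v].

Definition GE_O (V : {set T}) : {set T} :=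
  [set x in V | [exists M, is_max_matching V M && ~~ saturates M x]].
Definition GE_I (V : {set T}) : {set T} := nbhd V (GE_O V).
Definition GE_P (V : {set T}) : {set T} := V :\: (GE_O V :|: GE_I V).

Variable R : realType.
Local Open Scope ring_scope.

Definition LP_feasible (V : {set T}) (x : T -> R) : Prop :=
  (forall v, v \in V -> 0 <= x v <= 1) /\
  (forall u v, u \in V -> v \in V -> e u v -> 1 <= x u + x v).

Definition LP (V : {set T}) : R :=
  inf (fun s : R => exists x : T -> R, LP_feasible V x /\ s = \sum_(v in V) x v).

Definition surplus (V : {set T}) : R :=
  inf (fun s : R => exists Z : {set T},
         [/\ independent V Z, Z != finset.set0 & s = (#|nbhd V Z|)%:R - (#|Z|)%:R]).

Definition k_of (V : {set T}) (khat : R) : R := 2 * LP V - (MM V)%:R + khat.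

Definition khat_of (V : {set T}) (k : R) : R := k + (MM V)%:R - 2 * LP V.

End Graphs.

(* Write an output of either rule as G \ X, with k decreased by |X| (so |X| = 1 or 2).  The
   all-1/2 vector is feasible, so LP(G) <= |V|/2.  As surplus(G) >= 2 >= |X|, every nonempty
   independent set Z of G \ X has |N(Z)| >= |Z|, and this forces LP(G \ X) >= |V \ X|/2: for a
   feasible x and s > 0, the independent set {x <= 1/2 - s} has at least as many neighbours, all
   with x >= 1/2 + s, so the deficit below 1/2 is dominated by the excess above 1/2.  Hence
   khat_i <= khat + MM(G \ X) - MM(G), and it remains to see that each rule deletes vertices that
   lower the matching number: a vertex outside O, or two neighbours v, w of some u in O.  In the
   latter case a maximum matching of G avoiding v and w saturates u; switching it along the
   alternating path towards a maximum matching missing u frees u while leaving v or w exposed,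
   which gives an augmenting edge. *)

From HB Require Import structures.
From mathcomp Require Import all_boot all_order all_algebra.
From mathcomp Require Import boolp classical_sets reals.
From mathcomp Require Import lra zify.
From mathcomp Require Import fintype finset.
Import Order.TTheory GRing.Theory Num.Theory.

Section Matchings.
Set Implicit Arguments. Unset Strict Implicit.
Variables (T : finType) (e : rel T).
Implicit Types (V W : {set T}) (M N : {set {set T}}).

Lemma is_matchingP V M :
  reflect ((forall S, S \in M -> exists u v, [/\ u \in V, v \in V, e u v & S = [set u; v]]) /\
           (forall S1 S2, S1 \in M -> S2 \in M -> S1 != S2 -> [disjoint S1 & S2]))
          (is_matching e V M).
Proof.
apply: (iffP andP) => [[/forall_inP H1 /forall_inP H2]|[H1 H2]]; split.
- move=> S /H1 /existsP [u /existsP [v /and4P [Hu Hv He /eqP ->]]]; by exists u, v.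
- move=> S1 S2 /H2 /forall_inP H S2M; exact/implyP/H.
- apply/forall_inP => S /H1 [u [v [Hu Hv He ->]]]; apply/existsP; exists u; apply/existsP.
  by exists v; rewrite Hu Hv He eqxx.
- apply/forall_inP => S1 S1M; apply/forall_inP => S2 S2M; apply/implyP; exact: H2.
Qed.

Lemma saturatesP M q : reflect (exists2 S, S \in M & q \in S) (saturates M q).
Proof. by apply: (iffP existsP) => [[S /andP []]|[S]]; [exists S | exists S; apply/andP]. Qed.

Lemma matching_edge_uniq V M S1 S2 q :
  is_matching e V M -> S1 \in M -> S2 \in M -> q \in S1 -> q \in S2 -> S1 = S2.
Proof.
move=> /is_matchingP [_ H] M1 M2 q1 q2; apply/eqP; apply/negPn/negP => /(H _ _ M1 M2) D.
by rewrite (disjointFr D q1) in q2.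
Qed.

Lemma saturated_mem V M q : is_matching e V M -> saturates M q -> q \in V.
Proof.
move=> /is_matchingP [H _] /saturatesP [S /H [u [v [uV vV _ ->]]]].
by rewrite !inE => /orP [] /eqP ->.
Qed.

Lemma matching_subset V W M : is_matching e V M -> V \subset W -> is_matching e W M.
Proof.
move=> /is_matchingP [H1 H2] /subsetP VW; apply/is_matchingP; split => // S /H1.
by move=> [u [v [uV vV uv ->]]]; exists u, v; split => //; apply: VW.
Qed.

Lemma leq_card_MM V M : is_matching e V M -> #|M| <= MM e V.
Proof. exact: (@leq_bigmax_cond _ (is_matching e V) (fun M => #|M|) M). Qed.

Lemma exists_max_matching V : exists M, is_max_matching e V M.
Proof.
have : 0 < #|is_matching e V|.
  by apply/card_gt0P; exists set0; rewrite unfold_in; apply/is_matchingP; split=> [S|S1 S2]; rewrite inE.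
move=> /(eq_bigmax_cond (fun M : {set {set T}} => #|M|)) [M HM Heq].
by exists M; rewrite unfold_in in HM; apply/andP; rewrite /MM -Heq eqxx.
Qed.

Lemma MM_subset V W : V \subset W -> MM e V <= MM e W.
Proof.
move=> VW; have [M /andP [HM /eqP <-]] := exists_max_matching V.
exact/leq_card_MM/(matching_subset HM VW).
Qed.

Lemma saturatesU1 S M q : saturates (S |: M) q = (q \in S) || saturates M q.
Proof.
apply/saturatesP/orP => [[S' /setU1P [-> | S'M] qS']|[qS|/saturatesP [S' S'M qS']]].
- by left.
- by right; apply/saturatesP; exists S'.
- by exists S; rewrite ?setU11.
- by exists S'; rewrite ?setU1r.
Qed.

Lemma saturatesD1 V M S q :
  is_matching e V M -> S \in M -> saturates (M :\ S) q = (q \notin S) && saturates M q.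
Proof.
move=> HM SM; apply/saturatesP/andP => [[S' /setD1P [S'S S'M] qS']|[qNS /saturatesP [S' S'M qS']]].
  split; last by apply/saturatesP; exists S'.
  by apply: contra S'S => qS; rewrite (matching_edge_uniq HM S'M SM qS' qS).
by exists S' => //; rewrite in_setD1 S'M andbT; apply: contraNneq qNS => <-.
Qed.

Lemma matching_subset_edges V M M' : M' \subset M -> is_matching e V M -> is_matching e V M'.
Proof.
move=> /subsetP M'M /is_matchingP [H1 H2]; apply/is_matchingP.
by split=> [S /M'M /H1 //|S1 S2 /M'M S1M /M'M]; apply: H2.
Qed.

Lemma matching_setU1 V M a b :
  is_matching e V M -> a \in V -> b \in V -> e a b ->
  ~~ saturates M a -> ~~ saturates M b -> is_matching e V ([set a; b] |: M).
Proof.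
move=> /is_matchingP [H1 H2] aV bV ab na nb.
have disj S : S \in M -> [disjoint [set a; b] & S].
  move=> SM; rewrite -setI_eq0; apply/eqP/setP => x; rewrite !inE; apply/negbTE/andP.
  by case=> /orP [] /eqP -> xS; [move/saturatesP: na|move/saturatesP: nb]; apply; exists S.
apply/is_matchingP; split=> [S /setU1P [->|/H1 //]|S1 S2]; first by exists a, b.
case/setU1P=> [->|S1M] /setU1P [->|S2M]; rewrite ?eqxx // => S12.
- exact: disj.
- by rewrite disjoint_sym; apply: disj.
- exact: H2.
Qed.

Lemma exposed_edge_lt_MM V M a b :
  is_matching e V M -> a \in V -> b \in V -> e a b ->
  ~~ saturates M a -> ~~ saturates M b -> #|M| < MM e V.
Proof.
move=> HM aV bV ab na nb.
have abNM : [set a; b] \notin M.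
  by apply: contra na => abM; apply/saturatesP; exists [set a; b]; rewrite ?setU11.
by have := leq_card_MM (matching_setU1 HM aV bV ab na nb); rewrite cardsU1 abNM.
Qed.

Lemma max_matching_edge_saturated V M a b :
  is_max_matching e V M -> a \in V -> b \in V -> e a b ->
  ~~ saturates M a -> saturates M b.
Proof.
move=> /andP [HM /eqP HC] aV bV ab na; apply: contraT => nb.
by have := exposed_edge_lt_MM HM aV bV ab na nb; rewrite HC ltnn.
Qed.

Lemma max_matching_superset V W M :
  is_max_matching e W M -> W \subset V -> MM e V <= MM e W -> is_max_matching e V M.
Proof.
move=> /andP [HM /eqP HC] WV le_MM; have HMV := matching_subset HM WV.
by rewrite /is_max_matching HMV eqn_leq leq_card_MM //= HC.
Qed.

Lemma max_matching_swap V N S c d :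
  is_max_matching e V N -> S \in N -> c \in S -> d \in V -> e c d -> ~~ saturates N d ->
  is_max_matching e V ([set c; d] |: (N :\ S)).
Proof.
move=> /andP [HN /eqP HC] SN cS dV cd nd.
have cV : c \in V by apply: (saturated_mem HN); apply/saturatesP; exists S.
have nc : ~~ saturates (N :\ S) c by rewrite (saturatesD1 _ HN SN) cS.
have nd' : ~~ saturates (N :\ S) d by rewrite (saturatesD1 _ HN SN) (negbTE nd) andbF.
have HN' := matching_subset_edges (subD1set N S) HN.
have cdN : [set c; d] \notin N :\ S.
  by apply: contra nc => cdN; apply/saturatesP; exists [set c; d]; rewrite ?setU11.
by rewrite /is_max_matching matching_setU1 //= cardsU1 cdN -HC [#|N|](cardsD1 S) SN.
Qed.

Lemma GE_O_mem V y : y \in GE_O e V -> y \in V.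
Proof. by rewrite inE => /andP []. Qed.

Lemma GE_IP_notin_O V y :
  y \in GE_I e V :|: GE_P e V -> y \in V /\ y \notin GE_O e V.
Proof.
case/setUP; first by rewrite inE => /andP [-> /andP [-> _]].
by rewrite !inE negb_or => /andP [/andP [-> _] ->].
Qed.

Lemma MM_setD1_lt V x : x \in V -> x \notin GE_O e V -> MM e (V :\ x) < MM e V.
Proof.
move=> xV; apply: contraR; rewrite -leqNgt => le_MM.
have [M HM] := exists_max_matching (V :\ x).
rewrite inE xV; apply/existsP; exists M.
rewrite (max_matching_superset HM (subD1set V x) le_MM) /=.
by apply/negP => /(saturated_mem (andP HM).1); rewrite setD11.
Qed.

Section Exchange.
Hypotheses (e_sym : symmetric e) (e_irr : irreflexive e).

Lemma matching_partner V M S p :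
  is_matching e V M -> S \in M -> p \in S ->
  exists z, [/\ S = [set p; z], z \in V, e p z & p != z].
Proof.
move=> /is_matchingP [H _] /H [u [v [uV vV uv ->]]].
have neq a b : e a b -> a != b by apply: contraTneq => ->; rewrite e_irr.
rewrite !inE => /orP [] /eqP ->; first by exists v; rewrite neq.
by exists u; rewrite setUC e_sym neq // e_sym.
Qed.

Lemma exchange_at_exposed_end V M M' N0 p z z' :
  is_max_matching e V N0 -> [set p; z] \in N0 -> N0 \subset M :|: M' ->
  [set z; z'] \in M' -> z' \in V -> e z z' -> ~~ saturates N0 z' -> p != z -> p != z' ->
  exists2 N, [/\ is_max_matching e V N, ~~ saturates N p & N \subset M :|: M'] &
    forall q, ~~ saturates N0 q -> q != z' -> ~~ saturates N q.
Proof.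
move=> HN0 S0N0 sub S1M' z'V zz' nz' pz pz'.
have zS0 : z \in [set p; z] by rewrite !inE eqxx orbT.
have sat q : saturates ([set z; z'] |: (N0 :\ [set p; z])) q =
             [|| q == z, q == z' | (q \notin [set p; z]) && saturates N0 q].
  by rewrite saturatesU1 (saturatesD1 _ (andP HN0).1 S0N0) !inE orbA.
exists ([set z; z'] |: (N0 :\ [set p; z])); first split.
- exact: max_matching_swap HN0 S0N0 zS0 z'V zz' nz'.
- by rewrite sat (negbTE pz) (negbTE pz') !inE eqxx.
- by rewrite subUset sub1set inE S1M' orbT (subset_trans (subD1set _ _) sub).
- move=> q nq qz'; rewrite sat (negbTE qz') (negbTE nq) andbF !orbF.
  by apply: contraNneq nq => ->; apply/saturatesP; exists [set p; z].
Qed.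

Lemma max_matching_switch_closer V M M' p z z' :
  is_matching e V M -> is_max_matching e V M' -> [set p; z] \in M -> [set z; z'] \in M' ->
  p \in V -> e z p -> ~~ saturates M' p -> p != z' -> z != z' ->
  exists2 M'1, [/\ is_max_matching e V M'1, ~~ saturates M'1 z' & M :|: M'1 \subset M :|: M'] &
    #|M'1 :\: M| < #|M' :\: M|.
Proof.
move=> HMm HM' S0M S1M' pV zp nM'p pNz' zNz'.
have zpM : [set z; p] \in M by rewrite setUC.
exists ([set z; p] |: (M' :\ [set z; z'])); first split.
- exact: max_matching_swap HM' S1M' (setU11 _ _) pV zp nM'p.
- rewrite saturatesU1 (saturatesD1 _ (andP HM').1 S1M') !inE eqxx orbT /=.
  by rewrite [z' == z]eq_sym [z' == p]eq_sym (negbTE zNz') (negbTE pNz').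
- by apply/subsetP => S; rewrite !inE => /or3P [-> //|/eqP ->|/andP [_ ->]]; rewrite ?zpM ?orbT.
have S1nM : [set z; z'] \notin M.
  apply: contra pNz' => S1M; have := matching_edge_uniq HMm S1M S0M (setU11 _ _).
  rewrite !inE eqxx orbT => /(_ isT)/setP/(_ z').
  by rewrite !inE eqxx orbT [z' == z]eq_sym (negbTE zNz') orbF eq_sym => <-.
rewrite (cardsD1 [set z; z'] (M' :\: M)) inE S1nM S1M' add1n ltnS.
apply/subset_leq_card/subsetP => S; rewrite !inE => /andP [SnM /orP [/eqP SE|/andP [-> ->]]].
- by rewrite SE zpM in SnM.
- by rewrite SnM.
Qed.

(* N is M switched along the alternating path of M and M' that starts at p, and t is the other
   end of that path.  The induction is on |M' \ M|: when the path goes on beyond z', M' is first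
   switched on the edge {z, z'} so as to agree with M on {p, z}. *)
Lemma alternating_exchange V M M' p :
  is_max_matching e V M -> is_max_matching e V M' -> saturates M p -> ~~ saturates M' p ->
  exists t, exists2 N, [/\ is_max_matching e V N, ~~ saturates N p & N \subset M :|: M'] &
    forall q, ~~ saturates M q -> q != t -> ~~ saturates N q.
Proof.
have [n] := ubnP #|M' :\: M|; elim: n => // n IH in M' p *.
move=> lt_n HM HM' /saturatesP [S0 S0M pS0] nM'p.
have HMm := (andP HM).1; have HM'm := (andP HM').1.
have [z [S0E zV pz pNz]] := matching_partner HMm S0M pS0.
have pV : p \in V by apply: (saturated_mem HMm); apply/saturatesP; exists S0.
have /saturatesP [S1 S1M' zS1] := max_matching_edge_saturated HM' pV zV pz nM'p.
have [z' [S1E z'V zz' zNz']] := matching_partner HM'm S1M' zS1.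
have pNz' : p != z'.
  by apply: contraNneq nM'p => ->; apply/saturatesP; exists S1; rewrite // S1E !inE eqxx orbT.
subst S0 S1.
have [Mz'|nMz'] := boolP (saturates M z'); last first.
  exists z'; exact: exchange_at_exposed_end HM S0M (subsetUl M M') S1M' z'V zz' nMz' pNz pNz'.
have zp : e z p by rewrite e_sym.
have [M'1 [HM'1 nz'1 subM'1] lt_M'1] :=
  max_matching_switch_closer HMm HM' S0M S1M' pV zp nM'p pNz' zNz'.
have [t [N1 [HN1 nN1 subN1] qN1]] := IH M'1 z' (leq_trans lt_M'1 (ltnSE lt_n)) HM HM'1 Mz' nz'1.
have subN1' := subset_trans subN1 subM'1.
exists t; have [/saturatesP [S2 S2N1 pS2]|nN1p] := boolP (saturates N1 p); last by exists N1.
have S0N1 : [set p; z] \in N1.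
  have /subsetP/(_ S2 S2N1) := subN1'; rewrite inE => /orP [S2M|S2M'].
  - by rewrite -(matching_edge_uniq HMm S2M S0M pS2 (setU11 _ _)).
  - by case/saturatesP: nM'p; exists S2.
have [N [HN nNp subN] qN] :=
  exchange_at_exposed_end HN1 S0N1 subN1' S1M' z'V zz' nN1 pNz pNz'.
exists N => // q nMq qt; apply: qN; first exact: qN1.
by apply: contraNneq nMq => ->.
Qed.

Lemma MM_setD2_lt V u v w :
  u \in GE_O e V -> v \in V -> w \in V -> v != w -> e u v -> e u w ->
  MM e (V :\: [set v; w]) < MM e V.
Proof.
move=> uO vV wV vw uv uw; rewrite ltnNge; apply/negP => le_MM.
have [M HM] := exists_max_matching (V :\: [set v; w]).
have HMV := max_matching_superset HM (subsetDl _ _) le_MM.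
have exposed q : q \in [set v; w] -> ~~ saturates M q.
  by move=> qvw; apply: contraL qvw => /(saturated_mem (andP HM).1); rewrite inE => /andP [].
have [uV /existsP [M' /andP [HM' nM'u]]] := setIdP uO.
have sMu : saturates M u.
  by apply: max_matching_edge_saturated HMV vV uV _ (exposed _ (setU11 _ _)); rewrite e_sym.
have [t [N [HN nNu _] qN]] := alternating_exchange HMV HM' sMu nM'u.
have [q [qvw quN qt]] : exists q, [/\ q \in [set v; w], e u q & q != t].
  have [->|vt] := eqVneq t v; last by exists v; split; rewrite ?setU11 // eq_sym.
  by exists w; split; rewrite // ?inE ?eqxx ?orbT // eq_sym.
have qV : q \in V by case/set2P: qvw => ->.
by have := max_matching_edge_saturated HN uV qV quN nNu; rewrite (negbTE (qN q (exposed q qvw) qt)).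
Qed.
End Exchange.
End Matchings.

Local Open Scope ring_scope.

Lemma sum_le_of_superlevel_card (R : realDomainType) (T : finType) (P Q : {set T})
    (a b : T -> R) :
  (forall v, v \in P -> 0 < a v) -> (forall v, v \in Q -> 0 <= b v) ->
  (forall s, 0 < s -> (#|[set v in P | (s <= a v)%R]| <= #|[set v in Q | (s <= b v)%R]|)%N) ->
  \sum_(v in P) a v <= \sum_(v in Q) b v.
Proof.
have [n] := ubnP #|P|; elim: n => // n IH in P Q *.
move=> lt_n a_gt0 b_ge0 levels.
have [->|[p0 p0P]] := set_0Vmem P; first by rewrite big_set0; apply: sumr_ge0.
have [p pP pmax] := @arg_maxP _ _ _ p0 (fun x => x \in P) a p0P.
(* Remove the largest value of a together with the largest value of b, which is at least as
   large by the hypothesis at s = a p. *)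
have : (0 < #|[set v in Q | (a p <= b v)%R]|)%N.
  by apply: leq_trans (levels _ (a_gt0 p pP)); apply/card_gt0P; exists p; rewrite inE pP lexx.
move=> /card_gt0P [q0]; rewrite inE => /andP [q0Q apq0].
have [q qQ qmax] := @arg_maxP _ _ _ q0 (fun x => x \in Q) b q0Q.
have apq : a p <= b q := le_trans apq0 (qmax _ q0Q).
rewrite (big_setD1 p pP) (big_setD1 q qQ) /= lerD // IH //.
- by move: lt_n; rewrite (cardsD1 p P) pP.
- by move=> v; rewrite !inE => /andP [_ /a_gt0].
- by move=> v; rewrite !inE => /andP [_ /b_ge0].
move=> s s_gt0; have [sap|aps] := leP s (a p); last first.
  suff -> : [set v in P :\ p | s <= a v] = set0 by rewrite cards0.
  apply/setP => v; rewrite !inE; apply/negP => /andP [/andP [_ /pmax avp] sav].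
  by have := lt_le_trans aps (le_trans sav avp); rewrite ltxx.
have := levels s s_gt0.
rewrite (cardsD1 p [set v in P | s <= a v]) (cardsD1 q [set v in Q | s <= b v]).
rewrite !inE pP qQ sap (le_trans sap apq) !add1n ltnS.
have sepD1 (A : {set T}) (C : pred T) x : [set v in A | C v] :\ x = [set v in A :\ x | C v].
  by apply/setP => v; rewrite !inE andbA.
by rewrite !sepD1.
Qed.

Definition hall_indep {T : finType} (e : rel T) (W : {set T}) : Prop :=
  forall Z : {set T}, independent e W Z -> Z != set0 -> (#|Z| <= #|nbhd e W Z|)%N.

Section VertexCoverLP.
Set Implicit Arguments. Unset Strict Implicit.
Variables (R : realType) (T : finType) (e : rel T).

Lemma LP_feasible_sum_ge_half (W : {set T}) (x : T -> R) :
  LP_feasible e W x -> hall_indep e W -> #|W|%:R / 2 <= \sum_(v in W) x v.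
Proof.
move=> [x01 x_edge] hall.
set A := [set v in W | x v < 1/2]; set B := [set v in W | 1/2 < x v].
have deficit_le : \sum_(v in A) (1/2 - x v) <= \sum_(v in B) (x v - 1/2).
  apply: sum_le_of_superlevel_card => [v|v|s s_gt0]; try by rewrite inE => /andP [_]; lra.
  set Z := [set v in A | (s <= 1/2 - x v)%R].
  (* Z is independent and every neighbour y of Z has x y >= 1/2 + s. *)
  have [->|Zn0] := eqVneq Z set0; first by rewrite cards0.
  have ZW v : v \in Z -> v \in W /\ x v <= 1/2 - s.
    by rewrite !inE => /andP [/andP [vW _] ?]; split => //; lra.
  apply: leq_trans (hall Z _ Zn0) _.
    apply/andP; split; first by apply/subsetP => v /ZW [].
    apply/forall_inP => u /ZW [uW xu]; apply/forall_inP => v /ZW [vW xv].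
    by apply/negP => /(x_edge u v uW vW); lra.
  apply/subset_leq_card/subsetP => y; rewrite /nbhd inE.
  move=> /andP [yW /andP [_ /existsP [z /andP [/ZW [zW xz] zy]]]].
  by have := x_edge z y zW yW zy; rewrite !inE yW /=; lra.
have -> : \sum_(v in W) x v = #|W|%:R / 2 + (\sum_(v in B) (x v - 1/2) - \sum_(v in A) (1/2 - x v)).
  have sum_sep (C : pred T) (f : T -> R) :
      \sum_(v in [set v in W | C v]) f v = \sum_(v in W) (if C v then f v else 0).
    by rewrite big_mkcond [RHS]big_mkcond; apply: eq_bigr => v _; rewrite inE; case: (v \in W).
  have -> : #|W|%:R / 2 = \sum_(v in W) (1/2 : R) by rewrite sumr_const -mulr_natl; lra.
  rewrite !sum_sep -sumrB -big_split; apply: eq_bigr => v _ /=.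
  by case: ltgtP => h; lra.
lra.
Qed.

Lemma LP_le_half (V : {set T}) : LP e R V <= #|V|%:R / 2 :> R.
Proof.
apply: ge_inf.
  by exists 0 => s [x [[x01 _] ->]]; apply: sumr_ge0 => v /x01 /andP [].
exists (fun _ => 1/2); split; last by rewrite sumr_const -mulr_natl; lra.
by split => [v _|u v _ _ _]; [apply/andP; split|]; lra.
Qed.

Lemma LP_ge_half (W : {set T}) : hall_indep e W -> #|W|%:R / 2 <= LP e R W.
Proof.
move=> hall; apply: lb_le_inf; last by move=> s [x [x_feas ->]]; exact: LP_feasible_sum_ge_half.
exists (\sum_(v in W) 1), (fun _ => 1); split => //.
by split => [v _|u v _ _ _]; [apply/andP; split|]; lra.
Qed.

Lemma surplus_le (V Z : {set T}) :
  independent e V Z -> Z != set0 -> surplus e R V <= #|nbhd e V Z|%:R - #|Z|%:R :> R.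
Proof.
move=> Zind Zn0; apply: ge_inf; last by exists Z.
exists (- #|T|%:R) => s [Z' [_ _ ->]].
have := ler0n R #|nbhd e V Z'|; have := max_card (mem Z'); rewrite -(ler_nat R); lra.
Qed.

Lemma hall_indep_setD (V X : {set T}) : #|X|%:R <= surplus e R V -> hall_indep e (V :\: X).
Proof.
move=> X_le Z /andP [ZVX Zind] Zn0.
have ZV : independent e V Z by rewrite /independent Zind (subset_trans ZVX (subsetDl V X)).
have big_nbhd : (#|Z| + #|X| <= #|nbhd e V Z|)%N.
  by rewrite -(ler_nat R) natrD; have := surplus_le ZV Zn0; lra.
have nbhd_sub : nbhd e V Z \subset nbhd e (V :\: X) Z :|: X.
  apply/subsetP => y; rewrite !inE => /andP [yV yZ].
  by case: (boolP (y \in X)) => yX; rewrite ?orbT //= yV yZ.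
have := leq_trans (subset_leq_card nbhd_sub) (leq_card_setU _ _); lia.
Qed.

End VertexCoverLP.

Section BranchingBound.
Variables (R : realType) (T : finType) (e : rel T) (V : {set T}) (khat : R).

Lemma khat_of_setD_le (X : {set T}) :
  X \subset V -> #|X|%:R <= surplus e R V -> (MM e (V :\: X) < MM e V)%N ->
  khat_of e (V :\: X) (k_of e V khat - #|X|%:R) <= khat - 1.
Proof.
move=> XV X_le lt_MM.
have LP_V := LP_le_half R e V.
have LP_VX := LP_ge_half R (hall_indep_setD X_le).
have card_V : #|V|%:R = #|V :\: X|%:R + #|X|%:R :> R.
  by rewrite -natrD cardsD (setIidPr XV) subnK // subset_leq_card.
have MM_V : (MM e (V :\: X))%:R + 1 <= (MM e V)%:R :> R by move: lt_MM; rewrite -addn1 -(ler_nat R) natrD.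
rewrite /khat_of /k_of; lra.
Qed.

End BranchingBound.

Theorem lemma13 (R : realType) (T : finType) (e : rel T)
    (e_sym : symmetric e) (e_irr : irreflexive e)
    (V : {set T}) (khat : R)
    (hsurplus : 2 <= @surplus T e R V) :
  (* Branching Rule 1: edge {u,v} in G[I u P]; outputs G\{u}, G\{v}, k_i = k-1 *)
  (forall u v : T,
      u \in GE_I e V :|: GE_P e V -> v \in GE_I e V :|: GE_P e V -> e u v ->
      khat_of e (V :\ u) (k_of e V khat - 1) <= khat - 1 /\
      khat_of e (V :\ v) (k_of e V khat - 1) <= khat - 1) /\
  (* Branching Rule 2: applies iff Rule 1 does not *)
  ((~ exists u v : T, [/\ u \in GE_I e V :|: GE_P e V,
                          v \in GE_I e V :|: GE_P e V & e u v]) ->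
   forall u v w x y : T,
      u \in GE_O e V -> v \in GE_O e V -> w \in GE_O e V -> v != w ->
      e u v -> e u w ->
      x \in GE_P e (V :\ u) -> y \in GE_P e (V :\ u) -> e x y ->
      [/\ khat_of e (V :\: [set v; w]) (k_of e V khat - 2) <= khat - 1,
          khat_of e ((V :\ u) :\ x) (k_of e V khat - 2) <= khat - 1 &
          khat_of e ((V :\ u) :\ y) (k_of e V khat - 2) <= khat - 1]).
Proof.
have bound (X : {set T}) : X \subset V -> (#|X| <= 2)%N -> (MM e (V :\: X) < MM e V)%N ->
    khat_of e (V :\: X) (k_of e V khat - #|X|%:R) <= khat - 1.
  move=> XV X_le; apply: khat_of_setD_le => //.
  by apply: le_trans hsurplus; rewrite ler_nat.
have rule1 u : u \in GE_I e V :|: GE_P e V -> khat_of e (V :\ u) (k_of e V khat - 1) <= khat - 1.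
  move=> /GE_IP_notin_O [uV uO]; have := bound [set u]; rewrite cards1; apply => //.
    by rewrite sub1set.
  exact: MM_setD1_lt.
have rule2 u x : u \in V -> x \in GE_P e (V :\ u) ->
    khat_of e ((V :\ u) :\ x) (k_of e V khat - 2) <= khat - 1.
  move=> uV xP; have [xVu xO] := GE_IP_notin_O (subsetP (subsetUr _ _) x xP).
  have ux : u != x by move: xVu; rewrite !inE eq_sym => /andP [].
  rewrite setDDl; have := bound [set u; x]; rewrite cards2 ux; apply => //.
    by rewrite subUset !sub1set uV; case/setD1P: xVu.
  rewrite -setDDl; apply: leq_trans (MM_setD1_lt xVu xO) (MM_subset _ (subD1set _ _)).
split=> [u v uIP vIP _|_ u v w x y uO vO wO vw uv uw xP yP _].
  by split; apply: rule1.
have uV := GE_O_mem uO; have vV := GE_O_mem vO; have wV := GE_O_mem wO.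
split; [|exact: rule2 xP|exact: rule2 yP].
have := bound [set v; w]; rewrite cards2 vw; apply.
- by rewrite subUset !sub1set vV wV.
- by [].
- exact: MM_setD2_lt uO vV wV vw uv uw.
Qed.
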